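(* Let $\mathcal A=\{\ell_1,\dots,\ell_n\}$ be an arrangement of affine lines in $\mathbb C^2$, and let $\langle\beta_1,\dots,\beta_n\mid R_1,\dots,R_\nu\rangle$ be a finite presentation of $\pi_1(M(\mathcal A))$ in which $\beta_i$ is an elementary loop around $\ell_i$. Let $N\subset F_n$ be the normal closure of $R_1,\dots,R_\nu$ in the free group $F_n$ on $\beta_1,\dots,\beta_n$. Then the following are equivalent: (a) the $\mathbb Z[t^{\pm1}]$-submodule of $\mathbb Z[t^{\pm1}]^n$ generated by the vectors $v_j=\big((\partial R_j/\partial\beta_1)^\varphi,\dots,(\partial R_j/\partial\beta_n)^\varphi\big)$, $j=1,\dots,\nu$, equals $(1-t)\{x\in\mathbb Z[t^{\pm1}]^n:\sum_i x_i=0\}$; (b) $[F_n,F_n]=N\,[\ker\varphi,\ker\varphi]$. Equivalently, $\pi_1(M(\mathcal A))$ is abelian modulo the image of $[\ker\varphi,\ker\varphi]$.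
   Context: $M(\mathcal A)=\mathbb C^2\setminus\bigcup\ell_i$. $\varphi:F_n\to\langle t\rangle\cong\mathbb Z$ is the length homomorphism with $\varphi(\beta_i)=t$ for all $i$; it extends to a ring homomorphism $\mathbb Z[F_n]\to\mathbb Z[t^{\pm1}]$, and for $u\in\mathbb Z[F_n]$ we write $u^\varphi$ for its image. $\partial/\partial\beta_i:\mathbb Z[F_n]\to\mathbb Z[F_n]$ are the Fox free derivatives. Commutators are $[a,b]=aba^{-1}b^{-1}$. (Condition (a) is what the paper calls ''$\mathcal A$ is a-monodromic over $\mathbb Z$''.) *)

From HB Require Import structures.
From mathcomp Require Import all_boot all_order all_algebra.
Set Implicit Arguments. Unset Strict Implicit. Unset Printing Implicit Defensive.
Import Order.TTheory GRing.Theory Num.Theory.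
Local Open Scope ring_scope.

Definition Qt := {fraction {poly int}}.
Definition polyQ (p : {poly int}) : Qt := @FracField.tofrac {poly int} p.
Definition tvar : Qt := polyQ 'X.
Definition laurent (f : Qt) : Prop := exists (p : {poly int}) (k : nat), f = polyQ p * tvar ^- k.
Definition laurent_vec (n : nat) (x : 'rV[Qt]_n) : Prop := forall i, laurent (x 0 i).

(* a letter (i, false) is beta_i, (i, true) is beta_i^{-1} *)
Definition letter (n : nat) := ('I_n * bool)%type.
Definition word (n : nat) := seq (letter n).

Definition linv n (x : letter n) : letter n := (x.1, ~~ x.2).

Fixpoint freduce n (w : word n) : word n :=
  match w with
  | [::] => [::]
  | x :: w' => match freduce w' with
               | y :: r => if y == linv x then r else x :: y :: r
               | [::] => [:: x]
               end
  end.

Definition feq n (u v : word n) : Prop := freduce u = freduce v.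
Definition winv n (w : word n) : word n := rev (map (@linv n) w).
Definition wcomm n (a b : word n) : word n := a ++ b ++ winv a ++ winv b.

Definition in_gen n (S : word n -> Prop) (w : word n) : Prop :=
  exists l : seq (word n * bool),
    (forall p, p \in l -> S p.1) /\
    feq w (flatten (map (fun p => if p.2 then winv p.1 else p.1) l)).

(* length homomorphism phi : F_n -> <t> = Z, phi(beta_i) = t ; exponent sum *)
Definition lsign n (x : letter n) : int := if x.2 then -1 else 1.
Definition expsum n (w : word n) : int := \sum_(x <- w) lsign x.

Definition kerphi n (w : word n) : Prop := expsum w = 0.
Definition commF n : word n -> Prop := in_gen (fun w => exists a b, w = wcomm a b).
Definition commK n : word n -> Prop :=
  in_gen (fun w => exists a b, kerphi a /\ kerphi b /\ w = wcomm a b).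
Definition nclosure n nu (R : 'I_nu -> word n) : word n -> Prop :=
  in_gen (fun w => exists (u : word n) (j : 'I_nu), w = u ++ R j ++ winv u).
Definition NK n nu (R : 'I_nu -> word n) (w : word n) : Prop :=
  exists a b, nclosure R a /\ commK b /\ feq w (a ++ b).

(* (d w / d beta_i)^phi : Fox derivative followed by phi, computed by the
   Fox rules d(uv) = du + u dv, d beta_j/d beta_i = delta_ij,
   d beta_j^{-1}/d beta_i = - delta_ij beta_j^{-1}. *)
Definition phiL n (w : word n) : Qt := tvar ^ (expsum w).
Fixpoint foxphi n (i : 'I_n) (w : word n) : Qt :=
  match w with
  | [::] => 0
  | x :: w' =>
      (if x.1 == i then (if x.2 then - tvar ^ (-1 : int) else 1) else 0)
      + phiL [:: x] * foxphi i w'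
  end.

Definition foxvec n (w : word n) : 'rV[Qt]_n := \row_i foxphi i w.

(* Let K = ker phi.  Since phi is trivial on K, the Fox vector
   w |-> ((dw/dbeta_i)^phi)_i restricts to a homomorphism from K to Z[t^±1]^n that
   turns conjugation by x into multiplication by phi(x).  Its kernel is [K,K]: every
   word of K is a product of the Schreier words beta_0^k beta_i beta_0^-(k+1), whose
   Fox vectors are t^k e_i (i <> 0) up to a multiple of e_0, and by independence of
   the monomials t^k a vanishing Fox vector lets these factors cancel in pairs after
   commuting them modulo [K,K].  The Fox vector maps [F_n,F_n] onto
   (1-t){x : sum x_i = 0} (the commutators [beta_i beta_0^-1, beta_0] already give
   (1-t)(e_i - e_0), and conjugation supplies the powers of t), and, when the
   relators lie in K, maps N onto the span of the v_j.  Either of (a), (b) puts the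
   relators in [F_n,F_n], and then (b) says that [F_n,F_n] and N[K,K] have the same
   image, which is (a). *)

From HB Require Import structures.
From mathcomp Require Import all_boot all_order all_algebra.
From mathcomp Require Import ring zify.
From Corelib Require Import Setoid Morphisms.
Import Order.TTheory GRing.Theory Num.Theory.
Local Open Scope ring_scope.
Set Implicit Arguments. Unset Strict Implicit. Unset Printing Implicit Defensive.

(** * Free reduction *)

Definition red_cons n (x : letter n) (r : word n) : word n :=
  if r is y :: r' then (if y == linv x then r' else x :: r) else [:: x].

Lemma freduceE n (w : word n) : freduce w = foldr (@red_cons n) [::] w.
Proof. by elim: w => //= x w <-; case: (freduce w). Qed.

Fixpoint reduced n (r : word n) : bool :=
  if r is y :: ((z :: _) as r') then (z != linv y) && reduced r' else true.

Lemma linvK n : involutive (@linv n).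
Proof. by case=> a b; rewrite /linv /= negbK. Qed.

Lemma reduced_behead n (y : letter n) r : reduced (y :: r) -> reduced r.
Proof. by case: r => // z r /andP[]. Qed.

Lemma red_cons_reduced n (x : letter n) r : reduced r -> reduced (red_cons x r).
Proof.
case: r => [|y r] //= Hr; case: eqP => [_|Hne]; first exact: reduced_behead Hr.
by rewrite /= Hr andbT; apply/eqP => E; apply: Hne; rewrite E.
Qed.

Lemma red_consK n (x : letter n) r :
  reduced r -> red_cons x (red_cons (linv x) r) = r.
Proof.
case: r => [|y r] /= Hr; first by rewrite eqxx.
rewrite linvK; case: eqP => [Ey|_]; last by rewrite /= eqxx.
by subst y; case: r Hr => [|z r] //= /andP[/negbTE ->].
Qed.

Lemma foldr_red_cons_reduced n (u : word n) r :
  reduced r -> reduced (foldr (@red_cons n) r u).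
Proof. by elim: u => //= x u IH Hr; apply/red_cons_reduced/IH. Qed.

Lemma freduce_reduced n (u : word n) : reduced (freduce u).
Proof. by rewrite freduceE; apply: foldr_red_cons_reduced. Qed.

Lemma foldr_freduce n (u : word n) r : reduced r ->
  foldr (@red_cons n) r (freduce u) = foldr (@red_cons n) r u.
Proof.
move=> Hr; elim: u => [|x u IH] //.
have -> : freduce (x :: u) = red_cons x (freduce u) by rewrite /=; case: (freduce u).
rewrite [RHS]/= -IH; case E: (freduce u) => [|y s] //=; case: eqP => // Ey.
have := freduce_reduced u; rewrite E Ey => Hs.
by rewrite red_consK // foldr_red_cons_reduced // (reduced_behead Hs).
Qed.

Lemma freduce_cat n (u v : word n) :
  freduce (u ++ v) = foldr (@red_cons n) (freduce v) (freduce u).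
Proof.
by rewrite [LHS]freduceE foldr_cat -freduceE foldr_freduce // freduce_reduced.
Qed.

Lemma feq_refl n (u : word n) : feq u u.
Proof. by []. Qed.
Lemma feq_sym n (u v : word n) : feq u v -> feq v u.
Proof. exact: esym. Qed.
Lemma feq_trans n (u v w : word n) : feq u v -> feq v w -> feq u w.
Proof. exact: etrans. Qed.

Lemma feq_cat n (u u' v v' : word n) : feq u u' -> feq v v' -> feq (u ++ v) (u' ++ v').
Proof. by rewrite /feq !freduce_cat => -> ->. Qed.

Add Parametric Relation n : (word n) (@feq n)
  reflexivity proved by (@feq_refl n)
  symmetry proved by (@feq_sym n)
  transitivity proved by (@feq_trans n) as feq_rel.

Add Parametric Morphism n : (@cat (letter n)) with
  signature (@feq n) ==> (@feq n) ==> (@feq n) as cat_feq_morphism.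
Proof. by move=> *; apply: feq_cat. Qed.

Lemma feq_invariant T n (f : word n -> T) (g : letter n -> T -> T) :
  (forall x r, f (x :: r) = g x (f r)) -> (forall x a, g x (g (linv x) a) = a) ->
  forall u v, feq u v -> f u = f v.
Proof.
move=> fE gK.
have f_red u : f (freduce u) = f u.
  elim: u => [|x u IH] //; rewrite fE -IH /=.
  case: (freduce u) => [|y s] //=; case: eqP => [->|_]; by rewrite ?fE ?gK.
by move=> u v E; rewrite -f_red E f_red.
Qed.

Lemma winv_cat n (u v : word n) : winv (u ++ v) = winv v ++ winv u.
Proof. by rewrite /winv map_cat rev_cat. Qed.

Lemma winvK n : involutive (@winv n).
Proof. by move=> u; rewrite /winv map_rev revK -map_comp (eq_map (@linvK n)) map_id. Qed.

Lemma winv_cons n x (u : word n) : winv (x :: u) = winv u ++ [:: linv x].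
Proof. by rewrite /winv /= rev_cons -cats1. Qed.

Lemma feq_catV n (u : word n) : feq (u ++ winv u) [::].
Proof.
elim: u => [|x u IH] //; rewrite winv_cons.
have -> : (x :: u) ++ winv u ++ [:: linv x] = [:: x] ++ (u ++ winv u) ++ [:: linv x].
  by rewrite catA.
by rewrite IH /feq /= eqxx.
Qed.

Lemma feq_Vcat n (u : word n) : feq (winv u ++ u) [::].
Proof. by have := feq_catV (winv u); rewrite winvK. Qed.

Lemma feq_catK n (u x : word n) : feq ((u ++ x) ++ winv x) u.
Proof. by rewrite -catA feq_catV cats0. Qed.

Lemma feq_catVK n (u x : word n) : feq ((u ++ winv x) ++ x) u.
Proof. by rewrite -catA feq_Vcat cats0. Qed.

Lemma feq_winv n (u v : word n) : feq u v -> feq (winv u) (winv v).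
Proof.
move=> E; apply: (@feq_trans _ _ (winv u ++ (u ++ winv v))).
  rewrite -{1}[winv u]cats0; apply: feq_cat => //; apply: feq_sym.
  exact: feq_trans (feq_cat E (feq_refl _)) (feq_catV v).
by rewrite catA feq_Vcat.
Qed.

Add Parametric Morphism n : (@winv n) with
  signature (@feq n) ==> (@feq n) as winv_feq_morphism.
Proof. exact: feq_winv. Qed.

Lemma conj_wcomm n (x a b : word n) :
  feq (x ++ wcomm a b ++ winv x) (wcomm (x ++ a ++ winv x) (x ++ b ++ winv x)).
Proof. by rewrite /wcomm !winv_cat !winvK !catA; repeat setoid_rewrite feq_catVK. Qed.

Lemma in_gen_feq n (S : word n -> Prop) u v : in_gen S u -> feq u v -> in_gen S v.
Proof. by case=> l [Sl E] F; exists l; split; rewrite // -F. Qed.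

Add Parametric Morphism n (S : word n -> Prop) : (in_gen S) with
  signature (@feq n) ==> iff as in_gen_feq_morphism.
Proof. by move=> u v E; split=> H; apply: in_gen_feq H _. Qed.

Lemma in_gen_ind n (S P : word n -> Prop) :
  (forall u v, feq u v -> P u -> P v) -> P [::] ->
  (forall g, S g -> P g) -> (forall g, S g -> P (winv g)) ->
  (forall u v, P u -> P v -> P (u ++ v)) ->
  forall w, in_gen S w -> P w.
Proof.
move=> Pfeq P0 PS PV PC w [l [Sl E]]; apply: Pfeq (feq_sym E) _.
elim: l Sl {E} => [|p l IH] Sl //=.
apply: PC; last by apply: IH => q Hq; apply: Sl; rewrite inE Hq orbT.
have : S p.1 by apply: Sl; rewrite mem_head.
by case: p {Sl} => g [] /=; [apply: PV|apply: PS].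
Qed.

Lemma in_gen_nil n (S : word n -> Prop) : in_gen S [::].
Proof. by exists [::]. Qed.

Lemma in_gen_gen n (S : word n -> Prop) g : S g -> in_gen S g.
Proof. by move=> Sg; exists [:: (g, false)]; rewrite /= cats0; split=> // p /[!inE] /eqP ->. Qed.

Lemma in_gen_genV n (S : word n -> Prop) g : S g -> in_gen S (winv g).
Proof. by move=> Sg; exists [:: (g, true)]; rewrite /= cats0; split=> // p /[!inE] /eqP ->. Qed.

Lemma in_gen_cat n (S : word n -> Prop) u v :
  in_gen S u -> in_gen S v -> in_gen S (u ++ v).
Proof.
case=> l1 [S1 E1] [l2 [S2 E2]]; exists (l1 ++ l2); split.
  by move=> p; rewrite mem_cat => /orP[]; [apply: S1|apply: S2].
by rewrite map_cat flatten_cat E1 E2.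
Qed.

Lemma in_gen_winv n (S : word n -> Prop) u : in_gen S u -> in_gen S (winv u).
Proof.
apply: (in_gen_ind (P := fun u => in_gen S (winv u))) => [u' v E|||g|u' v Hu Hv].
- by rewrite E.
- exact: in_gen_nil.
- exact: in_gen_genV.
- by rewrite winvK; apply: in_gen_gen.
- by rewrite winv_cat; apply: in_gen_cat.
Qed.

Lemma in_gen_mono n (S T : word n -> Prop) u :
  (forall g, S g -> in_gen T g) -> in_gen S u -> in_gen T u.
Proof.
move=> ST; apply: (in_gen_ind (P := in_gen T)) => [u' v E|||g|]; rewrite ?E.
- by [].
- exact: in_gen_nil.
- exact: ST.
- by move/ST/in_gen_winv.
- exact: in_gen_cat.
Qed.

Lemma in_gen_conj n (S : word n -> Prop) x u :
  (forall g, S g -> in_gen S (x ++ g ++ winv x)) ->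
  in_gen S u -> in_gen S (x ++ u ++ winv x).
Proof.
move=> Sx; apply: (in_gen_ind (P := fun u => in_gen S (x ++ u ++ winv x))).
- by move=> u' v E; rewrite E.
- by rewrite cat0s feq_catV; apply: in_gen_nil.
- exact: Sx.
- by move=> g /Sx/in_gen_winv; rewrite !winv_cat winvK catA.
- move=> u1 u2 H1 H2; apply: in_gen_feq (in_gen_cat H1 H2) _.
  by rewrite -!catA (catA (winv x) x) feq_Vcat cat0s !catA.
Qed.

Definition wpow n (g : word n) (a : int) : word n :=
  match a with Posz k => flatten (nseq k g) | Negz k => flatten (nseq k.+1 (winv g)) end.

Lemma in_gen_pow n (S : word n -> Prop) g a : in_gen S g -> in_gen S (wpow g a).
Proof.
have gen_nseq k h : in_gen S h -> in_gen S (flatten (nseq k h)).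
  by move=> Sh; elim: k => [|k IH] /=; [apply: in_gen_nil|apply: in_gen_cat].
by move=> Sg; case: a => k; apply: gen_nseq => //; apply: in_gen_winv.
Qed.

Lemma commF_gen n (a b : word n) : commF (wcomm a b).
Proof. by apply: in_gen_gen; exists a, b. Qed.

Lemma commF_conj n (x u : word n) : commF u -> commF (x ++ u ++ winv x).
Proof. by apply: in_gen_conj => _ [a [b ->]]; rewrite conj_wcomm; apply: commF_gen. Qed.

Lemma nclosure_gen n nu (R : 'I_nu -> word n) j : nclosure R (R j).
Proof.
have : nclosure R ([::] ++ R j ++ winv [::]) by apply: in_gen_gen; exists [::], j.
by rewrite /= cats0.
Qed.

Lemma nclosure_conj n nu (R : 'I_nu -> word n) x u :
  nclosure R u -> nclosure R (x ++ u ++ winv x).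
Proof.
apply: in_gen_conj => _ [v [j ->]]; apply: in_gen_gen.
by exists (x ++ v), j; rewrite winv_cat -!catA.
Qed.

Lemma nclosure_commF n nu (R : 'I_nu -> word n) w :
  (forall j, commF (R j)) -> nclosure R w -> commF w.
Proof. by move=> HR; apply: in_gen_mono => _ [u [j ->]]; apply: commF_conj. Qed.

Lemma commK_commF n (w : word n) : commK w -> commF w.
Proof. by apply: in_gen_mono => _ [a [b [_ [_ ->]]]]; apply: commF_gen. Qed.

Lemma expsum_nil n : expsum (@nil (letter n)) = 0.
Proof. by rewrite /expsum big_nil. Qed.

Lemma expsum_cons n x (r : word n) : expsum (x :: r) = lsign x + expsum r.
Proof. by rewrite /expsum big_cons. Qed.

Lemma expsum_cat n (u v : word n) : expsum (u ++ v) = expsum u + expsum v.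
Proof. by rewrite /expsum big_cat. Qed.

Lemma lsign_linv n (x : letter n) : lsign (linv x) = - lsign x.
Proof. by case: x => i [] /=; rewrite /lsign /= ?opprK. Qed.

Lemma expsum_winv n (u : word n) : expsum (winv u) = - expsum u.
Proof.
elim: u => [|x u IH]; first by rewrite expsum_nil oppr0.
by rewrite winv_cons expsum_cat IH !expsum_cons expsum_nil lsign_linv addr0 opprD addrC.
Qed.

Lemma feq_expsum n (u v : word n) : feq u v -> expsum u = expsum v.
Proof.
apply: (feq_invariant (g := fun x a => lsign x + a)) => [x r|x a].
  exact: expsum_cons.
by rewrite lsign_linv addNKr.
Qed.

Lemma kerphi_cat n (u v : word n) : kerphi u -> kerphi v -> kerphi (u ++ v).
Proof. by rewrite /kerphi expsum_cat => -> ->; rewrite addr0. Qed.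

Lemma kerphi_winv n (u : word n) : kerphi u -> kerphi (winv u).
Proof. by rewrite /kerphi expsum_winv => ->; rewrite oppr0. Qed.

Lemma kerphi_conj n (x a : word n) : kerphi a -> kerphi (x ++ a ++ winv x).
Proof. by rewrite /kerphi !expsum_cat expsum_winv => ->; rewrite add0r addrN. Qed.

Lemma kerphi_wcomm n (a b : word n) : kerphi (wcomm a b).
Proof. by rewrite /kerphi /wcomm !expsum_cat !expsum_winv; ring. Qed.

Lemma tvar_neq0 : tvar != 0.
Proof. by rewrite /tvar /polyQ tofrac_eq0 polyX_eq0. Qed.

Lemma tvar_expz_eq1 (z : int) : tvar ^ z = 1 -> z = 0.
Proof.
have tvarXn_eq1 k : tvar ^+ k = 1 -> k = 0%N.
  move=> /eqP; rewrite /tvar /polyQ -tofracXn -tofrac1 tofrac_eq => /eqP.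
  by move=> /(congr1 (fun p : {poly int} => size p)); rewrite size_polyXn size_poly1 => -[].
case: z => k; first by move/tvarXn_eq1 ->.
by move=> /(congr1 GRing.inv); rewrite invrK invr1 => /tvarXn_eq1.
Qed.

Lemma subr_tvar_neq0 : 1 - tvar != 0.
Proof.
rewrite subr_eq0 eq_sym; apply/negP => /eqP T1.
by have := @tvar_expz_eq1 1; rewrite expr1z T1 => /(_ erefl) /eqP.
Qed.

Lemma phiL1 n (x : letter n) : phiL [:: x] = tvar ^ lsign x.
Proof. by rewrite /phiL expsum_cons expsum_nil addr0. Qed.

Lemma phiL_cat n (u v : word n) : phiL (u ++ v) = phiL u * phiL v.
Proof. by rewrite /phiL expsum_cat expfzDr // tvar_neq0. Qed.

Lemma phiL_neq0 n (u : word n) : phiL u != 0.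
Proof. exact: expfz_neq0 tvar_neq0. Qed.

Lemma phiL_winv n (u : word n) : phiL (winv u) = (phiL u)^-1.
Proof. by rewrite /phiL expsum_winv invr_expz. Qed.

Lemma phiL_kerphi n (u : word n) : kerphi u -> phiL u = 1.
Proof. by rewrite /phiL => ->. Qed.

(** * Fox calculus *)

Definition fox_letter n (i : 'I_n) (x : letter n) : Qt :=
  if x.1 == i then (if x.2 then - tvar ^ (-1 : int) else 1) else 0.

Lemma foxphi_cons n i x (r : word n) :
  foxphi i (x :: r) = fox_letter i x + tvar ^ lsign x * foxphi i r.
Proof. by rewrite /= phiL1. Qed.

Lemma foxphi_cat n i (u v : word n) :
  foxphi i (u ++ v) = foxphi i u + phiL u * foxphi i v.
Proof.
elim: u => [|x u IH]; first by rewrite /phiL expsum_nil mul1r add0r.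
by rewrite cat_cons !foxphi_cons IH (phiL_cat [:: x] u) phiL1; ring.
Qed.

Lemma fox_letter_linv n i (x : letter n) :
  fox_letter i x + tvar ^ lsign x * fox_letter i (linv x) = 0.
Proof.
case: x => j b; rewrite /fox_letter /lsign /=; case: (j == i); last by rewrite mulr0 addr0.
by case: b => /=; rewrite exprN1 ?mulr1 ?addNr // mulrN mulfV ?tvar_neq0 ?subrr.
Qed.

Lemma feq_foxphi n i (u v : word n) : feq u v -> foxphi i u = foxphi i v.
Proof.
apply: (feq_invariant (g := fun x a => fox_letter i x + tvar ^ lsign x * a)).
  exact: foxphi_cons.
move=> x a; rewrite lsign_linv mulrDr addrA fox_letter_linv add0r mulrA.
by rewrite -expfzDr ?tvar_neq0 // subrr mul1r.
Qed.

Lemma foxphi_winv n i (u : word n) : foxphi i (winv u) = - (phiL u)^-1 * foxphi i u.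
Proof.
have E : foxphi i u + phiL u * foxphi i (winv u) = 0.
  by rewrite -foxphi_cat (feq_foxphi i (feq_catV u)).
apply: (mulfI (phiL_neq0 u)); rewrite mulrA mulrN mulfV ?phiL_neq0 // mulN1r.
by apply/eqP; rewrite -addr_eq0 addrC E.
Qed.

Lemma sum_fox_letter n (x : letter n) :
  (\sum_i fox_letter i x) * (tvar - 1) = tvar ^ lsign x - 1.
Proof.
rewrite (bigD1 x.1) //= big1 => [|i Hi]; last by rewrite /fox_letter eq_sym (negbTE Hi).
rewrite addr0 /fox_letter eqxx /lsign; case: x.2; last by rewrite mul1r.
by rewrite exprN1 mulNr mulrBr mulVf ?tvar_neq0 // mulr1 opprB.
Qed.

Lemma sum_foxphi n (w : word n) : (\sum_i foxphi i w) * (tvar - 1) = phiL w - 1.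
Proof.
elim: w => [|x w IH]; first by rewrite big1 ?mul0r // /phiL expsum_nil subrr.
rewrite (eq_bigr _ (fun i _ => foxphi_cons i x w)) big_split /= -mulr_sumr mulrDl.
by rewrite sum_fox_letter -mulrA IH (phiL_cat [:: x] w) phiL1; ring.
Qed.

Lemma foxphi_wcomm n i (a b : word n) :
  foxphi i (wcomm a b) = (1 - phiL b) * foxphi i a + (phiL a - 1) * foxphi i b.
Proof.
rewrite /wcomm !foxphi_cat !foxphi_winv phiL_winv.
(* Field identities are proved over an abstract field: [field] is too slow on [Qt]. *)
have expand (F : fieldType) (A B fa fb : F) : A != 0 -> B != 0 ->
    fa + A * (fb + B * (- A^-1 * fa + A^-1 * (- B^-1 * fb))) =
    (1 - B) * fa + (A - 1) * fb.
  by move=> A0 B0; field; rewrite A0 B0.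
exact: expand (phiL_neq0 a) (phiL_neq0 b).
Qed.

Lemma foxvec_nil n : foxvec (@nil (letter n)) = 0.
Proof. by apply/rowP => i; rewrite !mxE. Qed.

Lemma foxvec_feq n (u v : word n) : feq u v -> foxvec u = foxvec v.
Proof. by move=> E; apply/rowP => i; rewrite !mxE (feq_foxphi i E). Qed.

Lemma foxvec_cat n (u v : word n) : foxvec (u ++ v) = foxvec u + phiL u *: foxvec v.
Proof. by apply/rowP => i; rewrite !mxE foxphi_cat. Qed.

Lemma foxvec_winv n (u : word n) : foxvec (winv u) = - (phiL u)^-1 *: foxvec u.
Proof. by apply/rowP => i; rewrite !mxE foxphi_winv. Qed.

Lemma foxvec_kerphi_cat n (u v : word n) :
  kerphi u -> foxvec (u ++ v) = foxvec u + foxvec v.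
Proof. by move=> Ku; rewrite foxvec_cat phiL_kerphi // scale1r. Qed.

Lemma foxvec_kerphi_winv n (u : word n) : kerphi u -> foxvec (winv u) = - foxvec u.
Proof. by move=> Ku; rewrite foxvec_winv phiL_kerphi // invr1 scaleN1r. Qed.

Lemma foxvec_conj n (u h : word n) :
  kerphi h -> foxvec (u ++ h ++ winv u) = phiL u *: foxvec h.
Proof.
move=> Kh; rewrite !foxvec_cat foxvec_winv (phiL_kerphi Kh) scale1r scalerDr scalerA.
by rewrite mulrN mulfV ?phiL_neq0 // scaleN1r addrCA subrr addr0.
Qed.

Lemma polyQD p q : polyQ (p + q) = polyQ p + polyQ q. Proof. exact: tofracD. Qed.
Lemma polyQM p q : polyQ (p * q) = polyQ p * polyQ q. Proof. exact: tofracM. Qed.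
Lemma polyQXn k : polyQ ('X ^+ k) = tvar ^+ k. Proof. exact: tofracXn. Qed.
Lemma polyQC (a : int) : polyQ a%:P = a%:~R.
Proof. by rewrite -[a in a%:P]intz rmorph_int /polyQ rmorph_int. Qed.

Lemma laurent_poly p : laurent (polyQ p).
Proof. by exists p, 0%N; rewrite expr0 invr1 mulr1. Qed.

Lemma laurent0 : laurent 0.
Proof. by have := laurent_poly 0; rewrite /polyQ tofrac0. Qed.

Lemma laurent1 : laurent 1.
Proof. by have := laurent_poly 1; rewrite /polyQ tofrac1. Qed.

Lemma laurentD f g : laurent f -> laurent g -> laurent (f + g).
Proof.
case=> p [k ->] [q [m ->]]; exists (p * 'X^m + q * 'X^k), (k + m)%N.
have frac_add (F : fieldType) (T P Q : F) : T != 0 ->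
    P * (T ^+ k)^-1 + Q * (T ^+ m)^-1 = (P * T ^+ m + Q * T ^+ k) * (T ^+ k * T ^+ m)^-1.
  move=> T0; have Tk : T ^+ k != 0 by apply: expf_neq0.
  have Tm : T ^+ m != 0 by apply: expf_neq0.
  by field; rewrite Tk Tm.
by rewrite polyQD !polyQM !polyQXn exprD; apply: frac_add tvar_neq0.
Qed.

Lemma laurentM f g : laurent f -> laurent g -> laurent (f * g).
Proof.
case=> p [k ->] [q [m ->]]; exists (p * q), (k + m)%N.
by rewrite polyQM exprD invfM mulrACA.
Qed.

Lemma laurentN f : laurent f -> laurent (- f).
Proof. by case=> p [k ->]; exists (- p), k; rewrite /polyQ tofracN mulNr. Qed.

Lemma laurent_sum I (r : seq I) (P : pred I) (F : I -> Qt) :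
  (forall i, P i -> laurent (F i)) -> laurent (\sum_(i <- r | P i) F i).
Proof.
by move=> H; elim/big_rec: _ => [|i x Pi]; [apply: laurent0|apply: laurentD; apply: H].
Qed.

Lemma laurent_expz (z : int) : laurent (tvar ^ z).
Proof.
case: z => k; first by have := laurent_poly 'X^k; rewrite polyQXn.
by exists 1, k.+1; rewrite /polyQ tofrac1 mul1r.
Qed.

Lemma laurent_nat k : laurent k%:R.
Proof. by have := laurent_poly k%:R; rewrite /polyQ rmorph_nat. Qed.

Lemma laurent_foxphi n i (w : word n) : laurent (foxphi i w).
Proof.
elim: w => [|x w IH]; first exact: laurent0.
rewrite foxphi_cons; apply: laurentD; last exact: laurentM (laurent_expz _) IH.
rewrite /fox_letter; case: (x.1 == i); last exact: laurent0.
by case: x.2; [apply/laurentN/laurent_expz|apply: laurent1].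
Qed.

Lemma laurent_geometric (z : int) : laurent ((1 - tvar ^ z) / (1 - tvar)).
Proof.
have geo k : (1 - tvar ^+ k) / (1 - tvar) = \sum_(i < k) tvar ^+ i.
  apply: (mulIf subr_tvar_neq0); rewrite mulfVK ?subr_tvar_neq0 //.
  rewrite -{1}(expr1n _ k) subrXX mulrC; congr (_ * _).
  by apply: eq_bigr => i _; rewrite expr1n mul1r.
have laurent_geo k : laurent ((1 - tvar ^+ k) / (1 - tvar)).
  by rewrite geo; apply: laurent_sum => i _; apply: (laurent_expz i).
case: z => k; first exact: laurent_geo.
have inv_geo (F : fieldType) (X T : F) : X != 0 -> 1 - T != 0 ->
    (1 - X^-1) / (1 - T) = - X^-1 * ((1 - X) / (1 - T)).
  by move=> X0 T1; field; rewrite X0 T1.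
have Tk : tvar ^+ k.+1 != 0 by apply: expf_neq0 tvar_neq0.
change (tvar ^ Negz k) with ((tvar ^+ k.+1)^-1); rewrite (inv_geo _ _ _ Tk subr_tvar_neq0).
by apply: laurentM; [apply/laurentN/(laurent_expz (Negz k))|apply: laurent_geo].
Qed.

Definition laurent_submod n (P : 'rV[Qt]_n -> Prop) : Prop :=
  [/\ P 0, forall x y, P x -> P y -> P (x + y)
         & forall c x, laurent c -> P x -> P (c *: x)].

(* The two sides of (a): the span of the [v_j], and [(1 - t)] times the vectors of
   coordinate sum zero. *)
Definition relmod n nu (R : 'I_nu -> word n) (x : 'rV[Qt]_n) : Prop :=
  exists c : 'I_nu -> Qt, (forall j, laurent (c j)) /\ x = \sum_(j < nu) c j *: foxvec (R j).

Definition augmod n (x : 'rV[Qt]_n) : Prop :=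
  exists y : 'rV[Qt]_n, laurent_vec y /\ \sum_(i < n) y 0 i = 0 /\ x = (1 - tvar) *: y.

Lemma relmod_submod n nu (R : 'I_nu -> word n) : laurent_submod (relmod R).
Proof.
split.
- exists (fun _ => 0); split => [j|]; first exact: laurent0.
  by rewrite big1 // => j _; rewrite scale0r.
- move=> _ _ [a [La ->]] [b [Lb ->]]; exists (fun j => a j + b j); split => [j|].
    exact: laurentD.
  by rewrite -big_split /=; apply: eq_bigr => j _; rewrite scalerDl.
- move=> c _ Lc [a [La ->]]; exists (fun j => c * a j); split => [j|].
    exact: laurentM.
  by rewrite scaler_sumr; apply: eq_bigr => j _; rewrite scalerA.
Qed.

Lemma relmod_foxvec n nu (R : 'I_nu -> word n) j : relmod R (foxvec (R j)).
Proof.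
exists (fun j' => (j' == j)%:R); split => [j'|]; first exact: laurent_nat.
by rewrite (bigD1 j) //= eqxx scale1r big1 ?addr0 // => j' /negbTE ->; rewrite scale0r.
Qed.

Lemma augmod_submod n : laurent_submod (@augmod n).
Proof.
split.
- exists 0; split; [|split]; last by rewrite scaler0.
    by move=> i; rewrite mxE; apply: laurent0.
  by rewrite big1 // => i _; rewrite mxE.
- move=> _ _ [a [La [Sa ->]]] [b [Lb [Sb ->]]]; exists (a + b); split; [|split].
  + by move=> i; rewrite mxE; apply: laurentD.
  + by rewrite (eq_bigr _ (fun i _ => mxE _ _ _ _)) big_split /= Sa Sb addr0.
  + by rewrite scalerDr.
- move=> c _ Lc [a [La [Sa ->]]]; exists (c *: a); split; [|split].
  + by move=> i; rewrite mxE; apply: laurentM.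
  + by rewrite (eq_bigr _ (fun i _ => mxE _ _ _ _)) -mulr_sumr Sa mulr0.
  + by rewrite !scalerA mulrC.
Qed.

Lemma augmod_kerphi n (w : word n) : augmod (foxvec w) -> kerphi w.
Proof.
case=> y [_ [Sy Ey]].
have fox_sum0 : \sum_i foxphi i w = 0.
  rewrite (eq_bigr (fun i => (1 - tvar) * y 0 i)) => [|i _]; first by rewrite -mulr_sumr Sy mulr0.
  by have := congr1 (fun v : 'rV[Qt]_n => v 0 i) Ey; rewrite /= !mxE.
apply: tvar_expz_eq1; apply/eqP; rewrite -subr_eq0.
by rewrite -[tvar ^ _]/(phiL w) -sum_foxphi fox_sum0 mul0r.
Qed.

Lemma in_gen_foxvec n (S : word n -> Prop) (P : 'rV[Qt]_n -> Prop) :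
  laurent_submod P -> (forall g, S g -> kerphi g /\ P (foxvec g)) ->
  forall w, in_gen S w -> kerphi w /\ P (foxvec w).
Proof.
case=> P0 PD PZ HS; apply: (in_gen_ind (P := fun w => kerphi w /\ P (foxvec w))).
- by move=> u v E; rewrite /kerphi (feq_expsum E) (foxvec_feq E).
- by rewrite /kerphi expsum_nil foxvec_nil.
- exact: HS.
- move=> g /HS[Kg Pg]; split; first exact: kerphi_winv.
  by rewrite foxvec_kerphi_winv // -scaleN1r; apply: PZ (laurentN laurent1) Pg.
- move=> u v [Ku Pu] [Kv Pv]; split; first exact: kerphi_cat.
  by rewrite foxvec_kerphi_cat //; apply: PD.
Qed.

Lemma augmod_foxvec_wcomm n (a b : word n) : augmod (foxvec (wcomm a b)).
Proof.
have sum0 (F : fieldType) (t A B Sa Sb : F) : 1 - t != 0 ->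
    Sa * (t - 1) = A - 1 -> Sb * (t - 1) = B - 1 ->
    (1 - B) / (1 - t) * Sa - (1 - A) / (1 - t) * Sb = 0.
  move=> t1 Ea Eb; have t1' : t - 1 != 0 by rewrite -opprB oppr_eq0.
  have -> : Sa = (A - 1) / (t - 1) by rewrite -Ea mulfK.
  have -> : Sb = (B - 1) / (t - 1) by rewrite -Eb mulfK.
  by field; rewrite t1 t1'.
have factor (F : fieldType) (t A B fa fb : F) : 1 - t != 0 ->
    (1 - B) * fa + (A - 1) * fb = (1 - t) * ((1 - B) / (1 - t) * fa - (1 - A) / (1 - t) * fb).
  by move=> t1; field; rewrite t1.
exists (\row_i ((1 - phiL b) / (1 - tvar) * foxphi i a - (1 - phiL a) / (1 - tvar) * foxphi i b)).
split; [|split].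
- move=> i; rewrite mxE.
  apply: laurentD; [|apply: laurentN];
    by apply: laurentM (laurent_geometric _) (laurent_foxphi _ _).
- rewrite (eq_bigr _ (fun i _ => mxE _ _ _ _)) sumrB -!mulr_sumr.
  exact: sum0 subr_tvar_neq0 (sum_foxphi a) (sum_foxphi b).
- by apply/rowP => i; rewrite !mxE foxphi_wcomm (factor _ _ _ _ _ _ subr_tvar_neq0).
Qed.

Lemma commF_foxvec n (w : word n) : commF w -> kerphi w /\ augmod (foxvec w).
Proof.
apply: in_gen_foxvec; first exact: augmod_submod.
by move=> _ [a [b ->]]; split; [apply: kerphi_wcomm|apply: augmod_foxvec_wcomm].
Qed.

Lemma commK_foxvec n (w : word n) : commK w -> kerphi w /\ foxvec w = 0.
Proof.
apply: (in_gen_foxvec (P := eq^~ 0)).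
  by split=> [|_ _ -> ->|c _ _ ->]; rewrite ?addr0 ?scaler0.
move=> _ [a [b [Ka [Kb ->]]]]; split; first exact: kerphi_wcomm.
by apply/rowP => i; rewrite !mxE foxphi_wcomm !phiL_kerphi // subrr !mul0r addr0.
Qed.

Lemma nclosure_foxvec n nu (R : 'I_nu -> word n) (w : word n) :
  (forall j, kerphi (R j)) -> nclosure R w -> kerphi w /\ relmod R (foxvec w).
Proof.
move=> KR; have [_ _ RZ] := relmod_submod R.
apply: in_gen_foxvec; first exact: relmod_submod.
move=> _ [u [j ->]]; split; first exact: kerphi_conj.
by rewrite foxvec_conj //; apply: RZ (laurent_expz _) (relmod_foxvec R j).
Qed.

(** * Realizing Laurent combinations of Fox vectors *)

Definition bpow n (i : 'I_n) (z : int) : word n :=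
  match z with Posz k => nseq k (i, false) | Negz k => nseq k.+1 (i, true) end.

Lemma expsum_nseq n (x : letter n) k : expsum (nseq k x) = lsign x *+ k.
Proof. by elim: k => [|k IH]; rewrite ?expsum_nil //= expsum_cons IH mulrS. Qed.

Lemma expsum_bpow n (i : 'I_n) z : expsum (bpow i z) = z.
Proof.
case: z => k; rewrite /bpow expsum_nseq /lsign /=; first by rewrite -[1 *+ k]/(k%:R) natz.
by rewrite mulNrn NegzE -[1 *+ k.+1]/(k.+1%:R) natz.
Qed.

Lemma phiL_bpow n (i : 'I_n) z : phiL (bpow i z) = tvar ^ z.
Proof. by rewrite /phiL expsum_bpow. Qed.

Lemma foxvec_wpow n (g : word n) a : kerphi g ->
  kerphi (wpow g a) /\ foxvec (wpow g a) = a%:~R *: foxvec g.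
Proof.
have fox_nseq k (h : word n) : kerphi h -> kerphi (flatten (nseq k h)) /\
    foxvec (flatten (nseq k h)) = foxvec h *+ k.
  move=> Kh; elim: k => [|k [IH1 IH2]] /=.
    by rewrite /kerphi expsum_nil foxvec_nil.
  by rewrite foxvec_kerphi_cat // IH2 mulrS; split; first exact: kerphi_cat.
move=> Kg; rewrite scaler_int; case: a => k /=; first exact: fox_nseq.
have [K1 F1] := fox_nseq k.+1 _ (kerphi_winv Kg); split => //.
by rewrite F1 foxvec_kerphi_winv // mulNrn.
Qed.

Section Realization.

Variables (n : nat) (S : word n -> Prop).
Hypothesis S_conj : forall x u, in_gen S u -> in_gen S (x ++ u ++ winv x).

(* Multiplication by [t] is realized by conjugating with a letter [beta_i]. *)
Lemma in_gen_foxvec_scale (i : 'I_n) g c : in_gen S g -> kerphi g -> laurent c ->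
  exists h, [/\ in_gen S h, kerphi h & foxvec h = c *: foxvec g].
Proof.
move=> Sg Kg [p [k ->]]; rewrite exprnN; elim/poly_ind: p (- k%:Z) => [|p a IH] z.
  exists [::]; rewrite /kerphi expsum_nil foxvec_nil /polyQ tofrac0 mul0r scale0r.
  by split=> //; apply: in_gen_nil.
have [h1 [S1 K1 F1]] := IH (z + 1).
have [Ka Fa] := foxvec_wpow a Kg.
exists (h1 ++ bpow i z ++ wpow g a ++ winv (bpow i z)); split.
- by apply: in_gen_cat S1 (S_conj _ (in_gen_pow _ Sg)).
- by apply: kerphi_cat K1 (kerphi_conj _ Ka).
rewrite foxvec_kerphi_cat // F1 foxvec_conj // Fa phiL_bpow !scalerA -scalerDl.
congr (_ *: _); rewrite polyQD polyQM polyQC expfzDr ?tvar_neq0 // expr1z.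
by rewrite /tvar; ring.
Qed.

Lemma in_gen_foxvec_comb I (r : seq I) (g : I -> word n) (c : I -> Qt) :
  (forall k, in_gen S (g k) /\ kerphi (g k)) -> (forall k, laurent (c k)) ->
  exists2 h, in_gen S h & foxvec h = \sum_(k <- r) c k *: foxvec (g k).
Proof.
move=> Sg Lc; case: (pickP (fun _ : 'I_n => true)) => [i _|no_index]; last first.
  by exists [::]; [apply: in_gen_nil|apply/rowP => j; have := no_index j].
suff [h [Sh _ Fh]] : exists h, [/\ in_gen S h, kerphi h &
    foxvec h = \sum_(k <- r) c k *: foxvec (g k)] by exists h.
elim: r => [|k r [h [Sh Kh Fh]]].
  by exists [::]; rewrite big_nil /kerphi expsum_nil foxvec_nil; split=> //; apply: in_gen_nil.
have [Sgk Kgk] := Sg k.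
have [h' [Sh' Kh' Fh']] := in_gen_foxvec_scale i Sgk Kgk (Lc k).
exists (h' ++ h); split; [exact: in_gen_cat|exact: kerphi_cat|].
by rewrite big_cons foxvec_kerphi_cat // Fh' Fh.
Qed.

End Realization.

Definition comm_gen n (i0 i : 'I_n) : word n :=
  wcomm [:: (i, false); (i0, true)] [:: (i0, false)].

Lemma foxvec_comm_gen n (i0 i : 'I_n) :
  foxvec (comm_gen i0 i) = (1 - tvar) *: (delta_mx 0 i - delta_mx 0 i0).
Proof.
have K : kerphi [:: (i, false); (i0, true)].
  by rewrite /kerphi !expsum_cons expsum_nil /lsign /= addr0 subrr.
apply/rowP => j; rewrite !mxE foxphi_wcomm (phiL_kerphi K) subrr mul0r addr0.
rewrite !foxphi_cons phiL1 /fox_letter /lsign /= !mulr0 !addr0 expr1z exprN1.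
rewrite [j == i]eq_sym [j == i0]eq_sym; congr (_ * _); case: (i == j); case: (i0 == j).
all: by rewrite /= ?mulr0 ?addr0 ?add0r ?subr0 ?sub0r ?mulrN ?mulfV ?tvar_neq0 ?subrr ?oppr0.
Qed.

Lemma augmod_commF n (x : 'rV[Qt]_n) : augmod x -> exists2 w, commF w & foxvec w = x.
Proof.
case: n x => [|n] x [y [Ly [Sy ->]]].
  by exists [::]; [apply: in_gen_nil|apply/rowP => -[]].
have -> : (1 - tvar) *: y = \sum_(i < n.+1) y 0 i *: foxvec (comm_gen ord0 i).
  under eq_bigr do rewrite foxvec_comm_gen scalerA mulrC -scalerA.
  rewrite -scaler_sumr; congr (_ *: _).
  under eq_bigr do rewrite scalerBr.
  by rewrite sumrB -scaler_suml Sy scale0r subr0 -row_sum_delta.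
apply: in_gen_foxvec_comb => [v u|i|i]; [exact: commF_conj| |exact: Ly].
by split; [apply: commF_gen|apply: kerphi_wcomm].
Qed.

Lemma relmod_nclosure n nu (R : 'I_nu -> word n) (x : 'rV[Qt]_n) :
  (forall j, kerphi (R j)) -> relmod R x -> exists2 a, nclosure R a & foxvec a = x.
Proof.
move=> KR [c [Lc ->]]; apply: in_gen_foxvec_comb => // [v u|j].
  exact: nclosure_conj.
by split; [apply: nclosure_gen|apply: KR].
Qed.

(** * Independence of Laurent monomials *)

Lemma shift_nonneg (s : seq int) : exists N : nat, forall z, z \in s -> 0 <= z + N%:Z.
Proof.
elim: s => [|z0 s [N leN]]; first by exists 0%N.
exists (N + `|z0|)%N => z; rewrite inE => /predU1P[->|/leN]; case: z0 => m /=; lia.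
Qed.

Lemma signed_monomials_coef (L : seq (int * bool)) (k : int) :
  \sum_(f <- L) (-1) ^+ f.2 * tvar ^ f.1 = 0 ->
  \sum_(f <- L | f.1 == k) (-1) ^+ f.2 = 0 :> int.
Proof.
move=> L0; have [N leN] := shift_nonneg (k :: map fst L).
have leNL f : f \in L -> 0 <= f.1 + N%:Z by move=> fL; apply: leN; rewrite inE map_f ?orbT.
pose P : {poly int} := \sum_(f <- L) (-1) ^+ f.2 *: 'X^(absz (f.1 + N%:Z)).
have P0 : P = 0.
  apply/eqP; rewrite -tofrac_eq0 rmorph_sum /=; apply/eqP.
  rewrite (eq_big_seq (fun f : int * bool => (-1) ^+ f.2 * tvar ^ f.1 * tvar ^+ N)) => [|f fL].
    by rewrite -mulr_suml L0 mul0r.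
  have tXn : tofrac ('X^(absz (f.1 + N%:Z)) : {poly int}) = tvar ^ f.1 * tvar ^+ N.
    rewrite tofracXn -[_ ^+ _]/(tvar ^ Posz (absz (f.1 + N%:Z))) gez0_abs ?leNL //.
    by rewrite expfzDr ?tvar_neq0.
  by case: f.2; rewrite ?expr0 ?expr1 ?scale1r ?scaleN1r ?tofracN tXn ?mul1r ?mulN1r ?mulNr.
have := congr1 (fun p : {poly int} => p`_(absz (k + N%:Z))) P0.
rewrite /= coef0 coef_sumMXn => E; rewrite -[RHS]E big_seq_cond [RHS]big_seq_cond.
apply: eq_bigl => f; case fL: (f \in L) => //=.
apply/eqP/eqP => [-> //|/(congr1 Posz)].
by rewrite !gez0_abs ?leNL ?leN ?mem_head //; apply: addIr.
Qed.

Lemma signed_monomials_cancel (e : int * bool) (L : seq (int * bool)) :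
  \sum_(f <- e :: L) (-1) ^+ f.2 * tvar ^ f.1 = 0 -> (e.1, ~~ e.2) \in L.
Proof.
case: e => k b L0; apply/negPn/negP => notin.
have := signed_monomials_coef k L0; rewrite big_cons eqxx /=.
have -> : \sum_(f <- L | f.1 == k) (-1) ^+ f.2 = (-1) ^+ b * \sum_(f <- L | f.1 == k) 1 :> int.
  rewrite mulr_sumr big_seq_cond [RHS]big_seq_cond.
  apply: eq_bigr => -[k' b'] /andP[/= fL /eqP kk'].
  rewrite mulr1; case: (eqVneq b' b) => [-> //|nb].
  have nbb : ~~ b = b' by move: nb; case: (b); case: (b').
  by move: notin; rewrite nbb -kk' fL.
have : 0 <= \sum_(f <- L | f.1 == k) (1 : int) by apply: sumr_ge0.
by case: (b) => /=; rewrite ?expr0 ?expr1; move: (\sum_(f <- L | _) _) => S; lia.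
Qed.

Definition eqK n (u v : word n) : Prop := commK (u ++ winv v).

Lemma eqK_feq n (u v : word n) : feq u v -> eqK u v.
Proof. by move=> E; rewrite /eqK /commK E feq_catV; apply: in_gen_nil. Qed.

Lemma eqK_trans n (u v w : word n) : eqK u v -> eqK v w -> eqK u w.
Proof.
move=> Huv Hvw; apply: in_gen_feq (in_gen_cat Huv Hvw) _.
by rewrite -catA (catA (winv v)) feq_Vcat.
Qed.

Lemma eqK_catr n (x u v : word n) : eqK u v -> eqK (u ++ x) (v ++ x).
Proof. by move=> H; apply: in_gen_feq H _; rewrite winv_cat catA feq_catK. Qed.

Lemma eqK_catC n (a b : word n) : kerphi a -> kerphi b -> eqK (a ++ b) (b ++ a).
Proof.
by move=> Ka Kb; apply: in_gen_gen; exists a, b; rewrite winv_cat /wcomm -!catA.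
Qed.

(** * Reidemeister--Schreier rewriting *)

Lemma bpowS n (i : 'I_n) (z : int) : feq (bpow i z ++ [:: (i, false)]) (bpow i (z + 1)).
Proof.
case: z => [m|[|m]].
- have -> : Posz m + 1 = Posz m.+1 by lia.
  by rewrite /bpow -addn1 nseqD.
- by rewrite /feq /= eqxx.
rewrite (_ : Negz m.+1 + 1 = Negz m); last by lia.
rewrite /bpow -addn1 nseqD -catA -[X in feq _ X]cats0; apply: feq_cat => //.
by rewrite /feq /= eqxx.
Qed.

(* The Reidemeister--Schreier generators of [ker phi]. *)
Definition schreier n (i0 i : 'I_n) (k : int) : word n :=
  bpow i0 k ++ [:: (i, false)] ++ winv (bpow i0 (k + 1)).

Definition schreier_letter n (i0 : 'I_n) (e : 'I_n * int * bool) : word n :=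
  if e.2 then winv (schreier i0 e.1.1 e.1.2) else schreier i0 e.1.1 e.1.2.

Definition schreier_word n (i0 : 'I_n) (L : seq ('I_n * int * bool)) : word n :=
  flatten (map (schreier_letter i0) L).

Fixpoint schreier_rewrite n (p : int) (w : word n) : seq ('I_n * int * bool) :=
  if w is x :: w' then
    (if x.2 then (x.1, p - 1, true) else (x.1, p, false)) :: schreier_rewrite (p + lsign x) w'
  else [::].

Lemma schreier_rewriteP n (i0 : 'I_n) (w : word n) (p : int) :
  feq (bpow i0 p ++ w) (schreier_word i0 (schreier_rewrite p w) ++ bpow i0 (p + expsum w)).
Proof.
elim: w p => [|x w IH] p; first by rewrite /= cats0 expsum_nil addr0.
rewrite /schreier_word /= -/(schreier_word i0 _) expsum_cons addrA -catA -IH.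
have insert u : feq w (winv u ++ u ++ w) by rewrite catA feq_Vcat.
case: x => i [] /=; rewrite /schreier_letter /schreier /lsign /=.
  rewrite winv_cat winv_cons winvK subrK -!catA; apply: feq_cat => //.
  exact: (feq_cat (feq_refl [:: (i, true)]) (insert _)).
rewrite -catA; apply: feq_cat => //; exact: (feq_cat (feq_refl [:: (i, false)]) (insert _)).
Qed.

Lemma kerphi_schreier n (i0 i : 'I_n) k : kerphi (schreier i0 i k).
Proof.
rewrite /kerphi /schreier !expsum_cat expsum_winv !expsum_bpow expsum_cons expsum_nil /lsign /=.
by ring.
Qed.

Lemma kerphi_schreier_letter n (i0 : 'I_n) e : kerphi (schreier_letter i0 e).
Proof. by rewrite /schreier_letter; case: e.2; [apply: kerphi_winv|]; apply: kerphi_schreier. Qed.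

Lemma kerphi_schreier_word n (i0 : 'I_n) L : kerphi (schreier_word i0 L).
Proof.
elim: L => [|e L IH]; first by rewrite /kerphi expsum_nil.
exact: kerphi_cat (kerphi_schreier_letter i0 e) IH.
Qed.

Lemma foxphi_schreier_letter n (i0 i : 'I_n) e : i0 != i ->
  foxphi i (schreier_letter i0 e) = if e.1.1 == i then (-1) ^+ e.2 * tvar ^ e.1.2 else 0.
Proof.
move=> i0i.
have fox_nseq k b : foxphi i (nseq k (i0, b)) = 0.
  by elim: k => //= k ->; rewrite mulr0 addr0 /fox_letter /= (negbTE i0i).
have fox_bpow z : foxphi i (bpow i0 z) = 0 by case: z => k; apply: fox_nseq.
have fox_schreier : foxphi i (schreier i0 e.1.1 e.1.2) = if e.1.1 == i then tvar ^ e.1.2 else 0.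
  rewrite /schreier !foxphi_cat foxphi_winv !fox_bpow foxphi_cons /= !mulr0 !addr0 add0r.
  by rewrite phiL_bpow /fox_letter /=; case: (e.1.1 == i); rewrite ?mulr1 ?mulr0.
rewrite /schreier_letter; case: e.2; last by rewrite fox_schreier expr0; case: ifP; rewrite ?mul1r.
rewrite foxphi_winv (phiL_kerphi (kerphi_schreier _ _ _)) invr1 fox_schreier expr1.
by case: ifP; rewrite ?mulr0.
Qed.

Lemma foxphi_schreier_word n (i0 i : 'I_n) L : i0 != i ->
  foxphi i (schreier_word i0 L) = \sum_(e <- L | e.1.1 == i) (-1) ^+ e.2 * tvar ^ e.1.2.
Proof.
move=> i0i; elim: L => [|e L IH]; first by rewrite big_nil.
rewrite /schreier_word /= -/(schreier_word i0 L) foxphi_cat IH.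
rewrite (phiL_kerphi (kerphi_schreier_letter i0 e)) mul1r big_cons foxphi_schreier_letter //.
by case: ifP; rewrite ?add0r.
Qed.

Lemma schreier_word_cat n (i0 : 'I_n) L1 L2 :
  schreier_word i0 (L1 ++ L2) = schreier_word i0 L1 ++ schreier_word i0 L2.
Proof. by rewrite /schreier_word map_cat flatten_cat. Qed.

Lemma schreier_word_cons n (i0 : 'I_n) e L :
  schreier_word i0 (e :: L) = schreier_letter i0 e ++ schreier_word i0 L.
Proof. by []. Qed.

Lemma schreier_letter_diag n (i0 : 'I_n) k b : feq (schreier_letter i0 (i0, k, b)) [::].
Proof.
have E : feq (schreier i0 i0 k) [::] by rewrite /schreier catA bpowS feq_catV.
by rewrite /schreier_letter; case: b; rewrite /= E.
Qed.

Lemma schreier_letterV n (i0 i : 'I_n) k b :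
  feq (schreier_letter i0 (i, k, b) ++ schreier_letter i0 (i, k, ~~ b)) [::].
Proof. by rewrite /schreier_letter; case: b; rewrite /= ?feq_Vcat ?feq_catV. Qed.

(* Induction on [L]: a letter of exponent [k] along [beta_i], i <> i0, has a partner of
   the opposite sign by independence of Laurent monomials; the two cancel after
   commuting modulo [[ker phi, ker phi]]. *)
Lemma schreier_word_eqK n (i0 : 'I_n) (L : seq ('I_n * int * bool)) :
  (forall i, i0 != i -> \sum_(e <- L | e.1.1 == i) (-1) ^+ e.2 * tvar ^ e.1.2 = 0) ->
  eqK (schreier_word i0 L) [::].
Proof.
have [m] := ubnP (size L); elim: m L => // m IH [|[[i k] b] L] sizeL L0.
  exact: eqK_feq.
rewrite schreier_word_cons.
case: (eqVneq i i0) => [ii0|ii0].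
  subst i; apply: eqK_trans (eqK_feq _) (IH L sizeL _).
    by rewrite schreier_letter_diag.
  by move=> j i0j; have := L0 j i0j; rewrite big_cons /= (negbTE i0j).
have i0i : i0 != i by rewrite eq_sym.
have cancel : \sum_(f <- (k, b) :: [seq (f.1.2, f.2) | f <- L & f.1.1 == i])
    (-1) ^+ f.2 * tvar ^ f.1 = 0.
  by rewrite big_cons big_map big_filter; have := L0 i i0i; rewrite big_cons eqxx.
case/mapP: (signed_monomials_cancel cancel) => -[[i' k'] b'].
rewrite mem_filter /= => /andP[/eqP ii' fL] [kk' bb']; subst i' k' b'.
case/splitPr: fL sizeL L0 => L1 L2 sizeL L0.
rewrite schreier_word_cat schreier_word_cons catA.
have K1 := kerphi_schreier_word i0 L1.
apply: eqK_trans (eqK_catr _ (eqK_catC (kerphi_schreier_letter i0 _) K1)) _.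
apply: eqK_trans (eqK_feq _) (IH (L1 ++ L2) _ _).
- by rewrite schreier_word_cat -catA (catA (schreier_letter i0 _)) schreier_letterV.
- by move: sizeL; rewrite /= !size_cat /=; lia.
move=> j i0j; rewrite -[RHS](L0 j i0j) big_cons !big_cat big_cons /=.
by case: (i == j) => //=; case: (b) => /=; ring.
Qed.

Lemma foxvec_eq0_commK n (w : word n) : kerphi w -> foxvec w = 0 -> commK w.
Proof.
case: w => [|x w] Kw Fw; first exact: in_gen_nil.
set i0 := x.1; set L := schreier_rewrite 0 (x :: w).
have E : feq (x :: w) (schreier_word i0 L).
  by move: (schreier_rewriteP i0 (x :: w) 0); rewrite Kw addr0 -[bpow i0 0]/[::] cats0; exact: id.
apply: in_gen_feq _ (feq_sym E); rewrite -[schreier_word i0 L]cats0.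
apply: (schreier_word_eqK (i0 := i0)) => i i0i.
rewrite -(foxphi_schreier_word L i0i) -(feq_foxphi i E).
by have := congr1 (fun v : 'rV[Qt]_n => v 0 i) Fw; rewrite /= !mxE.
Qed.

Lemma foxvec_eq_commK n (u v : word n) :
  kerphi u -> kerphi v -> foxvec u = foxvec v -> commK (winv u ++ v).
Proof.
move=> Ku Kv Euv; apply: foxvec_eq0_commK; first exact: kerphi_cat (kerphi_winv Ku) Kv.
by rewrite (foxvec_kerphi_cat v (kerphi_winv Ku)) (foxvec_kerphi_winv Ku) Euv addNr.
Qed.

Lemma augmod_foxvec_commF n (v : word n) : augmod (foxvec v) -> commF v.
Proof.
move=> Av; have [w Fw Ew] := augmod_commF Av.
have Kuv := foxvec_eq_commK (commF_foxvec Fw).1 (augmod_kerphi Av) Ew.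
by apply: in_gen_feq (in_gen_cat Fw (commK_commF Kuv)) _; rewrite catA feq_catV.
Qed.

Lemma NK_commF n nu (R : 'I_nu -> word n) w :
  (forall j, commF (R j)) -> NK R w -> commF w.
Proof.
move=> RF [a [b [Na [Kb E]]]].
exact: in_gen_feq (in_gen_cat (nclosure_commF RF Na) (commK_commF Kb)) (feq_sym E).
Qed.

Lemma commF_NK n nu (R : 'I_nu -> word n) w :
  (forall j, kerphi (R j)) -> (forall x, augmod x -> relmod R x) -> commF w -> NK R w.
Proof.
move=> KR aug_rel Fw; have [Kw Aw] := commF_foxvec Fw.
have [a Na Ea] := relmod_nclosure KR (aug_rel _ Aw).
exists a, (winv a ++ w); split=> //; split; last by rewrite catA feq_catV.
exact: foxvec_eq_commK (nclosure_foxvec KR Na).1 Kw Ea.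
Qed.

Lemma relmod_augmod n nu (R : 'I_nu -> word n) x :
  (forall j, commF (R j)) -> relmod R x -> augmod x.
Proof.
move=> RF Rx; have KR j : kerphi (R j) := (commF_foxvec (RF j)).1.
have [a Na <-] := relmod_nclosure KR Rx.
exact: (commF_foxvec (nclosure_commF RF Na)).2.
Qed.

Lemma augmod_relmod n nu (R : 'I_nu -> word n) x :
  (forall j, kerphi (R j)) -> (forall w, commF w -> NK R w) -> augmod x -> relmod R x.
Proof.
move=> KR FN /augmod_commF [w /FN [a [b [Na [Kb E]]]] <-].
rewrite (foxvec_feq E) foxvec_cat (commK_foxvec Kb).2 scaler0 addr0.
exact: (nclosure_foxvec KR Na).2.
Qed.

Unset Implicit Arguments.

Theorem theorem7p1 (n nu : nat) (R : 'I_nu -> word n) :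
  (forall x : 'rV[Qt]_n,
     (exists c : 'I_nu -> Qt, (forall j, laurent (c j)) /\
        x = \sum_(j < nu) c j *: foxvec (R j))
     <->
     (exists y : 'rV[Qt]_n, laurent_vec y /\ \sum_(i < n) y 0 i = 0 /\
        x = (1 - tvar) *: y))
  <->
  (forall w : word n, commF w <-> NK R w).
Proof.
split=> [modules_eq | groups_eq].
- have RA j : augmod (foxvec (R j)) by apply/modules_eq/relmod_foxvec.
  have KR j : kerphi (R j) := augmod_kerphi (RA j).
  have RF j : commF (R j) := augmod_foxvec_commF (RA j).
  by move=> w; split; [apply: commF_NK KR (fun x => (modules_eq x).2)|apply: NK_commF RF].
- have RF j : commF (R j).
    apply/groups_eq; exists (R j), [::]; split; first exact: nclosure_gen.
    by split; [apply: in_gen_nil|rewrite cats0].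
  have KR j : kerphi (R j) := (commF_foxvec (RF j)).1.
  by move=> x; split; [apply: relmod_augmod RF|apply: augmod_relmod KR (fun w => (groups_eq w).1)].
Qed.
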